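(* Let $H$ be a Kekul\'ean hexagonal system and $n\ge0$. The map $f$ from the set of Clar covers of $H$ with exactly $n$ hexagons to the set of induced subgraphs of $R(H)$ isomorphic to $Q_n$ is surjective: for every induced subgraph $G_n$ of $R(H)$ isomorphic to $Q_n$ there is a Clar cover $C$ of $H$ with exactly $n$ hexagons such that $f(C)=G_n$.
   Context: A hexagonal system is a 2-connected finite plane graph in which every interior face is a regular hexagon of side length one; its hexagons are the boundaries of its interior faces; it is Kekul\'ean if it has a perfect matching. A Clar cover of $H$ is a spanning subgraph each of whose components is a hexagon of $H$ or a single edge. The resonance graph $R(H)$ has the perfect matchings of $H$ as vertices, two adjacent iff their symmetric difference is the edge set of a hexagon of $H$. For a Clar cover $C$, $f(C)$ denotes the subgraph of $R(H)$ induced by all perfect matchings $M$ of $H$ such that every hexagon component of $C$ is $M$-alternating and every single-edge component of $C$ belongs to $M$. *)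

From HB Require Import structures.
From mathcomp Require Import all_boot all_order all_algebra.
From mathcomp Require Import finmap.
Set Implicit Arguments. Unset Strict Implicit. Unset Printing Implicit Defensive.
Import Order.TTheory GRing.Theory Num.Theory.
Local Open Scope fset_scope.

(* Hexagonal cells of the honeycomb lattice, in axial coordinates: the cell
   (a,b) is adjacent (shares an edge) with (a+-1,b), (a,b+-1), (a+1,b-1),
   (a-1,b+1). *)
Definition cell := (int * int)%type.

Definition cell_adj (c d : cell) : bool :=
  let: (a, b) := c in
  d \in [:: ((a + 1)%R, b); ((a - 1)%R, b); (a, (b + 1)%R); (a, (b - 1)%R);
            ((a + 1)%R, (b - 1)%R); ((a - 1)%R, (b + 1)%R)].

(* Vertices of the honeycomb lattice = triangles of three mutually adjacent
   cells: (a,b,false) is the triangle {(a,b),(a+1,b),(a,b+1)} and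
   (a,b,true) is the triangle {(a+1,b),(a,b+1),(a+1,b+1)}. *)
Definition vert := (int * int * bool)%type.
(* An edge is the 2-element set of its end vertices. *)
Definition edge := {fset vert}.

(* The six vertices of cell (a,b), in cyclic order around the hexagon. *)
Definition hexcyc (c : cell) : seq vert :=
  let: (a, b) := c in
  [:: (a, b, false); ((a - 1)%R, b, true); ((a - 1)%R, b, false);
      ((a - 1)%R, (b - 1)%R, true); (a, (b - 1)%R, false); (a, (b - 1)%R, true)].

Definition vdef : vert := (Posz 0, Posz 0, false).

Definition hexV (c : cell) : {fset vert} := [fset x in hexcyc c].

Definition hexedge (c : cell) (i : nat) : edge :=
  [fset nth vdef (hexcyc c) i; nth vdef (hexcyc c) (i.+1 %% 6)].

Definition hexE (c : cell) : {fset edge} :=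
  [fset hexedge c 0; hexedge c 1; hexedge c 2; hexedge c 3; hexedge c 4; hexedge c 5].

Definition HV (S : {fset cell}) : {fset vert} := \bigcup_(c <- S) hexV c.
Definition HE (S : {fset cell}) : {fset edge} := \bigcup_(c <- S) hexE c.

Definition gconnected (W : {fset vert}) (E : {fset edge}) : Prop :=
  forall u v, u \in W -> v \in W ->
    exists p : seq vert,
      [/\ path (fun x y => [fset x; y] \in E) u p, last u p = v
        & all (fun x => x \in W) p].

Definition two_connected (W : {fset vert}) (E : {fset edge}) : Prop :=
  [/\ 3 <= #|` W|, gconnected W E & forall x, x \in W -> gconnected (W `\ x) E].

(* Every bounded face of the plane graph (HV S, HE S) is a cell of S:
   every cell not in S lies in the unbounded face, i.e. can be joined through
   cells not in S (crossing edges not in HE S) to the half plane to the right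
   of all cells of S. *)
Definition holefree (S : {fset cell}) : Prop :=
  forall c : cell, c \notin S ->
    exists p : seq cell,
      [/\ path cell_adj c p, all (fun d => d \notin S) p
        & forall s, s \in S -> (s.1 < (last c p).1)%R].

Definition hexagonal_system (S : {fset cell}) : Prop :=
  two_connected (HV S) (HE S) /\ holefree S.

Definition perfect_matching (S : {fset cell}) (M : {fset edge}) : Prop :=
  M `<=` HE S /\
  forall v, v \in HV S -> #|` [fset e in M | v \in e] | = 1.

Definition kekulean (S : {fset cell}) : Prop :=
  exists M, perfect_matching S M.

Definition alternating (c : cell) (M : {fset edge}) : bool :=
  [&& hexedge c 0 \in M, hexedge c 1 \notin M, hexedge c 2 \in M,
      hexedge c 3 \notin M, hexedge c 4 \in M & hexedge c 5 \notin M] ||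
  [&& hexedge c 0 \notin M, hexedge c 1 \in M, hexedge c 2 \notin M,
      hexedge c 3 \in M, hexedge c 4 \notin M & hexedge c 5 \in M].

Definition res_adj (S : {fset cell}) (M1 M2 : {fset edge}) : Prop :=
  exists2 h, h \in S & (M1 `\` M2) `|` (M2 `\` M1) = hexE h.

(* A Clar cover, given by its hexagon components Hs and single-edge
   components Es: they are hexagons / edges of H and every vertex of H lies
   in exactly one component. *)
Definition clar_cover (S : {fset cell}) (Hs : {fset cell}) (Es : {fset edge}) : Prop :=
  [/\ Hs `<=` S, Es `<=` HE S &
      forall v, v \in HV S ->
        (#|` [fset h in Hs | v \in hexV h] | + #|` [fset e in Es | v \in e] |)%N = 1].

Definition in_fC (S : {fset cell}) (Hs : {fset cell}) (Es : {fset edge})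
  (M : {fset edge}) : Prop :=
  [/\ perfect_matching S M, forall h, h \in Hs -> alternating h M & Es `<=` M].

Definition hq_adj (n : nat) (x y : {ffun 'I_n -> bool}) : bool :=
  #|[set i | x i != y i]| == 1.

Definition induced_Qn (S : {fset cell}) (n : nat) (W : {fset {fset edge}}) : Prop :=
  (forall M, M \in W -> perfect_matching S M) /\
  exists phi : {ffun 'I_n -> bool} -> {fset edge},
    [/\ injective phi,
        (forall M, M \in W <-> exists x, phi x = M)
      & forall x y, res_adj S (phi x) (phi y) <-> hq_adj x y].

(* Let phi embed Q_n in R(H) and put M0 := phi 0.  The cube edge from 0 to the
   i-th unit vector switches M0 along a hexagon h_i.  Since two distinct hexagons
   share at most one edge, a 4-cycle of R(H) switches opposite sides along the
   same hexagon; by induction over the cube every edge in direction i switches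
   h_i, so phi x is M0 with the hexagons h_i for x_i = 1 switched, and every
   h_i is phi x-alternating.  If h_i and h_j met in a vertex v, the edges of M0
   and of M0 with h_i switched at v would both lie on both hexagons; so the h_i
   are disjoint, and together with the edges of M0 off them they form a Clar
   cover C with f(C) = phi(Q_n). *)

From mathcomp Require Import all_boot all_order all_algebra finmap.
From mathcomp Require Import zify.
Set Implicit Arguments. Unset Strict Implicit.
Local Open Scope fset_scope.

Definition vtx (c : cell) (k : nat) : vert := nth vdef (hexcyc c) k.

Lemma size_hexcyc c : size (hexcyc c) = 6.
Proof. by case: c. Qed.

Lemma hexcyc_uniq c : uniq (hexcyc c).
Proof. by case: c => a b /=; rewrite !inE !xpair_eqE /= !andbF !andbT /=; lia. Qed.

Lemma vtx_inj c i j : i < 6 -> j < 6 -> (vtx c i == vtx c j) = (i == j).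
Proof. by move=> Hi Hj; rewrite nth_uniq ?size_hexcyc ?hexcyc_uniq. Qed.

Lemma vtx_hexV c k : k < 6 -> vtx c k \in hexV c.
Proof. by move=> Hk; rewrite inE mem_nth ?size_hexcyc. Qed.

Lemma hexVP c v : reflect (exists2 k, k < 6 & v = vtx c k) (v \in hexV c).
Proof.
apply: (iffP idP) => [|[k Hk ->]]; last exact: vtx_hexV.
rewrite inE => vc; exists (index v (hexcyc c)); last by rewrite /vtx nth_index.
by rewrite -(size_hexcyc c) index_mem.
Qed.

Lemma hexedgeE c k : hexedge c k = [fset vtx c k; vtx c (k.+1 %% 6)].
Proof. by []. Qed.

Lemma hexedge_hexE c k : k < 6 -> hexedge c k \in hexE c.
Proof.
rewrite /hexE; move: (hexedge c) => f.
by rewrite !inE; case: k => [|[|[|[|[|[|k]]]]]] //= _; rewrite eqxx ?orbT.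
Qed.

Lemma hexEP c e : reflect (exists2 k, k < 6 & e = hexedge c k) (e \in hexE c).
Proof.
apply: (iffP idP) => [|[k Hk ->]]; last exact: hexedge_hexE.
rewrite /hexE; move: (hexedge c) => f.
rewrite !inE -!orbA => /or4P[|||/or3P[||]] /eqP->;
by [exists 0 | exists 1 | exists 2 | exists 3 | exists 4 | exists 5].
Qed.

Lemma hexedge_inj c i j : i < 6 -> j < 6 -> (hexedge c i == hexedge c j) = (i == j).
Proof.
move=> Hi Hj; apply/idP/idP => [/eqP E|/eqP-> //].
have : vtx c i \in hexedge c j by rewrite -E hexedgeE in_fset2 eqxx.
have : vtx c (i.+1 %% 6) \in hexedge c j by rewrite -E hexedgeE in_fset2 eqxx orbT.
rewrite !hexedgeE !in_fset2 !vtx_inj ?ltn_mod //; clear E.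
by case: i Hi => [|[|[|[|[|[|i]]]]]] Hi //; case: j Hj => [|[|[|[|[|[|j]]]]]] Hj.
Qed.

Lemma card_hexE c : #|` hexE c| = 6.
Proof.
have finj := hexedge_inj c; rewrite /hexE; move: (hexedge c) finj => f finj.
have -> : [fset f 0; f 1; f 2; f 3; f 4; f 5] = [fset e in [seq f k | k <- iota 0 6]].
  by apply/fsetP => e; rewrite !inE -!orbA orbF.
by rewrite card_fseq undup_id //= !inE !finj.
Qed.

Lemma hexE_hexV c e v : e \in hexE c -> v \in e -> v \in hexV c.
Proof.
by case/hexEP => k Hk ->; rewrite hexedgeE in_fset2 => /orP[]/eqP->;
  rewrite vtx_hexV ?ltn_mod.
Qed.

Lemma hexE_edge c e : e \in hexE c ->
  exists u w, [/\ u != w, e = [fset u; w], u \in hexV c & w \in hexV c].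
Proof.
case/hexEP => k Hk ->; exists (vtx c k), (vtx c (k.+1 %% 6)).
rewrite vtx_inj ?ltn_mod // !vtx_hexV ?ltn_mod //.
by split => //; case: k Hk => [|[|[|[|[|[|k]]]]]].
Qed.

Lemma hexV_two_edges c v : v \in hexV c ->
  exists2 k, k < 6 & v \in hexedge c k /\ v \in hexedge c (k.+1 %% 6).
Proof.
case/hexVP => j Hj ->; exists ((j + 5) %% 6); rewrite ?ltn_mod //.
rewrite !hexedgeE !in_fset2 !vtx_inj ?ltn_mod //.
by case: j Hj => [|[|[|[|[|[|j]]]]]].
Qed.

Definition vert_cells (v : vert) : seq cell :=
  let: (x, y, b) := v in
  if b then [:: ((x + 1)%R, y); (x, (y + 1)%R); ((x + 1)%R, (y + 1)%R)]
  else [:: (x, y); ((x + 1)%R, y); (x, (y + 1)%R)].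

Lemma hexV_vert_cells c v : v \in hexV c -> c \in vert_cells v.
Proof.
rewrite inE; case: c => a b; case: v => [[x y] []];
by rewrite /= !inE !xpair_eqE /=; lia.
Qed.

Lemma vert_cells_inj c d u w : c != d ->
  c \in vert_cells u -> d \in vert_cells u -> c \in vert_cells w -> d \in vert_cells w ->
  u.2 = w.2 -> u = w.
Proof.
case: c d u w => [c1 c2] [d1 d2] [[x y] t] [[x' y'] t'] /= cd ++++ tt; subst t'.
case: t; rewrite !inE !xpair_eqE => H1 H2 H3 H4; apply/eqP;
by rewrite !xpair_eqE eqxx andbT; move: cd; rewrite xpair_eqE; lia.
Qed.

(* Two distinct cells share at most one vertex of each orientation. *)
Lemma hexV_meet_le2 c d : c != d -> #|` hexV c `&` hexV d| <= 2.
Proof.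
move=> cd; set A := hexV c `&` hexV d.
have snd_inj : {in A &, injective (fun v : vert => v.2)}.
  move=> u w; rewrite !in_fsetI => /andP[uc ud] /andP[wc wd].
  by apply: (vert_cells_inj cd); apply: hexV_vert_cells.
move/card_in_imfsetP/eqP: snd_inj => <-.
apply: (leq_trans (fsubset_leq_card (B := [fset true; false]) _)).
  by apply/fsubsetP => -[]; rewrite !inE.
by rewrite cardfs2.
Qed.

Lemma hexE_meet_le1 c d : c != d -> #|` hexE c `&` hexE d| <= 1.
Proof.
move=> cd; set V := hexV c `&` hexV d.
suff /fsubset_leq_card : hexE c `&` hexE d `<=` [fset V] by rewrite cardfs1.
apply/fsubsetP => e; rewrite in_fsetI in_fset1 => /andP[ec ed].
have [u [w [uw eE _ _]]] := hexE_edge ec.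
have eV : e `<=` V.
  by apply/fsubsetP => v ve; rewrite in_fsetI (hexE_hexV ec) ?(hexE_hexV ed).
rewrite eqEfcard eV /= (leq_trans (hexV_meet_le2 cd)) //.
by rewrite eE cardfs2 uw.
Qed.

Lemma in_fset_sep (T : choiceType) (A : {fset T}) (P : pred T) x :
  (x \in [fset y in A | P y]) = (x \in A) && P x.
Proof. by rewrite inE. Qed.

Definition covered_once (M : {fset edge}) (v : vert) : Prop :=
  #|` [fset e in M | v \in e]| = 1.

Lemma covered_onceP M v : covered_once M v ->
  exists e, [/\ e \in M, v \in e & forall e', e' \in M -> v \in e' -> e' = e].
Proof.
move/eqP/cardfs1P => [e Ee]; exists e.
have /[!in_fset_sep] /andP[eM ve] : e \in [fset e in M | v \in e] by rewrite Ee inE.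
split=> // e' e'M ve'.
by apply/eqP; rewrite -in_fset1 -Ee in_fset_sep e'M.
Qed.

Lemma alternatingP c M : alternating c M <->
  (forall k, k < 6 -> (hexedge c k \in M) != (hexedge c (k.+1 %% 6) \in M)).
Proof.
rewrite /alternating; move: (hexedge c) => f; split.
  case/orP => [/andP[a0 /and5P[/negbTE a1 a2 /negbTE a3 a4 /negbTE a5]]|
               /andP[/negbTE a0 /and5P[a1 /negbTE a2 a3 /negbTE a4 a5]]];
  by case=> [|[|[|[|[|[|k]]]]]] //= _; rewrite ?a0 ?a1 ?a2 ?a3 ?a4 ?a5.
move=> H; move: (H 0 isT) (H 1 isT) (H 2 isT) (H 3 isT) (H 4 isT) => /=.
by case: (f 0 \in M); case: (f 1 \in M); case: (f 2 \in M); case: (f 3 \in M);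
   case: (f 4 \in M); case: (f 5 \in M).
Qed.

Lemma alternating_matched_edge c M v e : alternating c M -> v \in hexV c ->
  covered_once M v -> e \in M -> v \in e -> e \in hexE c.
Proof.
move=> /alternatingP altM vc /covered_onceP[m [mM vm Um]] eM ve.
have [k Hk [vk vk1]] := hexV_two_edges vc; rewrite (Um e eM ve).
have [kM|kNM] := boolP (hexedge c k \in M).
  by rewrite -(Um _ kM vk) hexedge_hexE.
have k1M : hexedge c (k.+1 %% 6) \in M.
  by move: (altM k Hk); rewrite (negbTE kNM); case: (_ \in M).
by rewrite -(Um _ k1M vk1) hexedge_hexE ?ltn_mod.
Qed.

Lemma alternating_agree c M M0 k : alternating c M -> alternating c M0 -> k < 6 ->
  (hexedge c k \in M) = (hexedge c k \in M0) (+) ((hexedge c 0 \in M) != (hexedge c 0 \in M0)).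
Proof.
rewrite /alternating; move: (hexedge c) => f.
case/orP => [/andP[a0 /and5P[/negbTE a1 a2 /negbTE a3 a4 /negbTE a5]]|
             /andP[/negbTE a0 /and5P[a1 /negbTE a2 a3 /negbTE a4 a5]]];
case/orP => [/andP[b0 /and5P[/negbTE b1 b2 /negbTE b3 b4 /negbTE b5]]|
             /andP[/negbTE b0 /and5P[b1 /negbTE b2 b3 /negbTE b4 b5]]];
by case: k => [|[|[|[|[|[|k]]]]]] Hk //=;
   rewrite ?a0 ?a1 ?a2 ?a3 ?a4 ?a5 ?b0 ?b1 ?b2 ?b3 ?b4 ?b5.
Qed.

Definition flips (M M' H : {fset edge}) : Prop :=
  forall e, (e \in M') = (e \in M) (+) (e \in H).

Lemma flipsC M M' H : flips M M' H -> flips M' M H.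
Proof. by move=> D e; rewrite D -addbA addbb addbF. Qed.

Lemma symdiff_flips M M' H : (M `\` M') `|` (M' `\` M) = H -> flips M M' H.
Proof.
by move=> <- e; rewrite in_fsetU !in_fsetD; case: (e \in M); case: (e \in M').
Qed.

Lemma res_adj_flips S M M' : res_adj S M M' -> exists2 c, c \in S & flips M M' (hexE c).
Proof. by case=> c cS /symdiff_flips; exists c. Qed.

Lemma flips_alternating c M M' : flips M M' (hexE c) ->
  (forall v, v \in hexV c -> covered_once M v /\ covered_once M' v) ->
  alternating c M.
Proof.
move=> D cov; apply/alternatingP => k Hk.
have Hk1 : k.+1 %% 6 < 6 by rewrite ltn_mod.
set v := vtx c (k.+1 %% 6).
have [/covered_onceP[m [_ _ U]] /covered_onceP[m' [_ _ U']]] := cov v (vtx_hexV c Hk1).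
have vk : v \in hexedge c k by rewrite hexedgeE in_fset2 eqxx orbT.
have vk1 : v \in hexedge c (k.+1 %% 6) by rewrite hexedgeE in_fset2 eqxx.
have neq : hexedge c k != hexedge c (k.+1 %% 6).
  by rewrite hexedge_inj //; clear -Hk; case: k Hk => [|[|[|[|[|[|k]]]]]].
have D1 := D (hexedge c k); have D2 := D (hexedge c (k.+1 %% 6)).
rewrite hexedge_hexE // addbT in D1; rewrite hexedge_hexE // addbT in D2.
move: (hexedge c k) (hexedge c (k.+1 %% 6)) neq vk vk1 D1 D2 => e1 e2 neq vk vk1 D1 D2.
have notboth (N : {fset edge}) m0 : (forall e, e \in N -> v \in e -> e = m0) ->
    ~~ ((e1 \in N) && (e2 \in N)).
  by move=> UN; apply/negP => /andP[a b]; rewrite (UN _ a vk) (UN _ b vk1) eqxx in neq.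
move: (notboth _ _ U) (notboth _ _ U'); rewrite D1 D2.
by case: (e1 \in M); case: (e2 \in M).
Qed.

Lemma two_common_edges_eq a b e e' : e != e' -> e \in hexE a -> e' \in hexE a ->
  e \in hexE b -> e' \in hexE b -> a = b.
Proof.
move=> ee' ea e'a eb e'b; apply/eqP/negPn/negP => /hexE_meet_le1.
move: (hexE a) (hexE b) ea e'a eb e'b => A B ea e'a eb e'b.
suff /fsubset_leq_card : [fset e; e'] `<=` A `&` B by rewrite cardfs2 ee'; lia.
by apply/fsubsetP => x; rewrite in_fset2 in_fsetI => /orP[]/eqP->; apply/andP.
Qed.

Lemma alternating_disjoint a b M M' v : flips M M' (hexE a) ->
  covered_once M v -> covered_once M' v ->
  alternating a M -> alternating b M -> alternating b M' ->
  v \in hexV a -> v \in hexV b -> a = b.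
Proof.
move=> D cov cov' aM bM bM' va vb.
have [m [mM vm U]] := covered_onceP cov; have [m' [m'M' vm' _]] := covered_onceP cov'.
have ma := alternating_matched_edge aM va cov mM vm.
have mb := alternating_matched_edge bM vb cov mM vm.
have m'b := alternating_matched_edge bM' vb cov' m'M' vm'.
have m'a : m' \in hexE a.
  apply/negPn/negP => m'Na; move: (m'M'); rewrite D (negbTE m'Na) addbF => m'M.
  by move: m'Na; rewrite (U _ m'M vm') ma.
have mm' : m != m' by apply: contraTneq m'M' => <-; rewrite D mM ma.
exact: two_common_edges_eq mm' ma m'a mb m'b.
Qed.

(* Every edge of [hexE q] lies in [hexE b], [hexE p] or [hexE a], and a hexagon
   other than [q] shares at most one edge with it: 6 <= 3 unless [a = q]. *)
Lemma flips_square M M1 M2 M3 p q a b : p != q ->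
  flips M M1 (hexE p) -> flips M M2 (hexE q) ->
  flips M1 M3 (hexE a) -> flips M2 M3 (hexE b) -> M3 != M -> a = q.
Proof.
move=> pq D1 D2 D3 D4 M3M; apply/eqP/negPn/negP => aq.
have ap : a != p.
  apply: contraNneq M3M => ap; apply/eqP/fsetP => e.
  by rewrite D3 D1 ap -addbA addbb addbF.
have bq : b != q.
  apply: contraNneq M3M => bq; apply/eqP/fsetP => e.
  by rewrite D4 D2 bq -addbA addbb addbF.
have meet_q c : c != q -> #|` hexE q `&` hexE c| <= 1.
  by rewrite fsetIC; apply: hexE_meet_le1.
have := card_hexE q; have := meet_q _ bq; have := meet_q _ pq; have := meet_q _ aq.
move: (hexE p) (hexE q) (hexE a) (hexE b) D1 D2 D3 D4 => P Q A B D1 D2 D3 D4 QA QP QB cardQ.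
have cover : Q `<=` (Q `&` B) `|` (Q `&` P) `|` (Q `&` A).
  apply/fsubsetP => e eQ; rewrite !in_fsetU !in_fsetI eQ.
  have := D3 e; rewrite D4 D1 D2 eQ.
  by case: (e \in M); case: (e \in B); case: (e \in P); case: (e \in A).
have cardU (X Y : {fset edge}) : #|` X `|` Y| <= #|` X| + #|` Y| by rewrite cardfsU leq_subr.
have := fsubset_leq_card cover.
have := cardU ((Q `&` B) `|` (Q `&` P)) (Q `&` A); have := cardU (Q `&` B) (Q `&` P).
lia.
Qed.

Definition toggle {n} (x : {ffun 'I_n -> bool}) (i : 'I_n) : {ffun 'I_n -> bool} :=
  [ffun j => x j (+) (j == i)].

Lemma toggleE n (x : {ffun 'I_n -> bool}) i j : toggle x i j = x j (+) (j == i).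
Proof. exact: ffunE. Qed.

Lemma toggleK n (i : 'I_n) : involutive (toggle ^~ i).
Proof. by move=> x; apply/ffunP => j; rewrite !toggleE -addbA addbb addbF. Qed.

Lemma toggleC n (x : {ffun 'I_n -> bool}) i j :
  toggle (toggle x i) j = toggle (toggle x j) i.
Proof. by apply/ffunP => k; rewrite !toggleE -!addbA (addbC (k == i)). Qed.

Lemma toggle_inj n (x : {ffun 'I_n -> bool}) : injective (toggle x).
Proof.
move=> i j /ffunP/(_ i); rewrite !toggleE eqxx.
by case: (eqVneq i j) => // _; case: (x i).
Qed.

Lemma toggle2_neq n (x : {ffun 'I_n -> bool}) i j : i != j -> toggle (toggle x j) i != x.
Proof.
apply: contraNneq => /(congr1 (toggle ^~ i)); rewrite toggleK => /toggle_inj ->.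
by rewrite eqxx.
Qed.

Lemma hq_adj_toggle n (x : {ffun 'I_n -> bool}) i : hq_adj x (toggle x i).
Proof.
rewrite /hq_adj (_ : [set j | x j != toggle x i j] = [set i]) ?cards1 //.
by apply/setP => j; rewrite !inE toggleE; case: (j == i); case: (x j).
Qed.

Lemma bool_ffun_ind n (P : {ffun 'I_n -> bool} -> Prop) :
  P [ffun => false] -> (forall x i, P x -> P (toggle x i)) -> forall x, P x.
Proof.
move=> P0 PS x; move Ek : #|[set i | x i]| => k.
elim: k x Ek => [|k IH] x cardx.
  suff -> : x = [ffun => false] by [].
  apply/ffunP => i; rewrite ffunE; apply/negbTE/negP => xi.
  by move/eqP: cardx; rewrite cards_eq0 => /eqP/setP/(_ i); rewrite !inE xi.
have /set0Pn[i] : [set i | x i] != set0 by rewrite -cards_eq0 cardx.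
rewrite inE => xi; rewrite -(toggleK i x); apply/PS/IH.
apply/eqP; rewrite -eqSS -cardx (cardsD1 i [set j | x j]) inE xi eqSS.
apply/eqP/eq_card => j; rewrite !inE toggleE.
by case: (eqVneq j i) => [->|]; rewrite ?xi ?addbF.
Qed.

Lemma HV_hexV S c v : c \in S -> v \in hexV c -> v \in HV S.
Proof. by move=> cS vc; apply/bigfcupP; exists c; rewrite ?cS. Qed.

Lemma HE_vertex S e : e \in HE S -> exists2 u, u \in e & u \in HV S.
Proof.
case/bigfcupP => c /andP[cS _] ec; have [u [w [_ -> uc _]]] := hexE_edge ec.
by exists u; rewrite ?in_fset2 ?eqxx ?(HV_hexV cS uc).
Qed.

Section CubeInResonanceGraph.

Variables (S : {fset cell}) (n : nat) (phi : {ffun 'I_n -> bool} -> {fset edge}).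
Hypothesis phi_pm : forall x, perfect_matching S (phi x).
Hypothesis phi_inj : injective phi.
Hypothesis phi_adj : forall x y, hq_adj x y -> res_adj S (phi x) (phi y).

Let zero : {ffun 'I_n -> bool} := [ffun => false].
Let M0 := phi zero.

Lemma phi_covered x v : v \in HV S -> covered_once (phi x) v.
Proof. by case: (phi_pm x) => _; apply. Qed.

Lemma phi_covered_hexV x c v : c \in S -> v \in hexV c -> covered_once (phi x) v.
Proof. by move=> cS vc; apply/phi_covered/(HV_hexV cS vc). Qed.

Lemma exists_flip_hex x i : exists c,
  (c \in S) && ((phi x `\` phi (toggle x i)) `|` (phi (toggle x i) `\` phi x) == hexE c).
Proof.
by case: (phi_adj (hq_adj_toggle x i)) => c cS Ec; exists c; rewrite cS Ec eqxx.
Qed.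

Definition hex i : cell := xchoose (exists_flip_hex zero i).

Lemma hex_in_S i : hex i \in S.
Proof. by case/andP: (xchooseP (exists_flip_hex zero i)). Qed.

Lemma flips_hex i : flips M0 (phi (toggle zero i)) (hexE (hex i)).
Proof. by case/andP: (xchooseP (exists_flip_hex zero i)) => _ /eqP/symdiff_flips. Qed.

Lemma hex_inj : injective hex.
Proof.
move=> i j hij; apply: (@toggle_inj n zero); apply: phi_inj; apply/fsetP => e.
by rewrite !flips_hex hij.
Qed.

(* By induction over the cube: in a square with sides in directions [i] and [j],
   [flips_square] forces opposite sides to flip the same hexagon. *)
Lemma flips_toggle x i : flips (phi x) (phi (toggle x i)) (hexE (hex i)).
Proof.
elim/bool_ffun_ind: x i => [|x j IH] i; first exact: flips_hex.
have [<-|ij] := eqVneq i j; first by rewrite toggleK; apply/flipsC/IH.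
have [a aS Da] := res_adj_flips (phi_adj (hq_adj_toggle (toggle x j) i)).
have [b bS Db] := res_adj_flips (phi_adj (hq_adj_toggle (toggle x i) j)).
rewrite -toggleC in Db.
have hji : hex j != hex i by rewrite (inj_eq hex_inj) eq_sym.
have phiNx : phi (toggle (toggle x j) i) != phi x by rewrite (inj_eq phi_inj) toggle2_neq.
by rewrite -(flips_square hji (IH j) (IH i) Da Db phiNx).
Qed.

Lemma alternating_hex x i : alternating (hex i) (phi x).
Proof.
apply: flips_alternating (flips_toggle x i) _ => v vc.
by split; apply: phi_covered_hexV (hex_in_S i) vc.
Qed.

Lemma hexV_disjoint i j v : v \in hexV (hex i) -> v \in hexV (hex j) -> i = j.
Proof.
move=> vi vj; apply: hex_inj.
exact: alternating_disjoint (flips_toggle zero i) (phi_covered_hexV _ (hex_in_S i) vi)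
  (phi_covered_hexV _ (hex_in_S i) vi) (alternating_hex _ i) (alternating_hex _ j)
  (alternating_hex _ j) vi vj.
Qed.

Lemma hexE_disjoint i j e : e \in hexE (hex i) -> e \in hexE (hex j) -> i = j.
Proof.
move=> ei ej; have [u [w [_ eE _ _]]] := hexE_edge ei.
have ue : u \in e by rewrite eE in_fset2 eqxx.
exact: hexV_disjoint (hexE_hexV ei ue) (hexE_hexV ej ue).
Qed.

Definition cube_edges (x : {ffun 'I_n -> bool}) : {fset edge} :=
  \bigcup_(i | x i) hexE (hex i).

Lemma cube_edgesP (x : {ffun 'I_n -> bool}) e :
  reflect (exists2 i, x i & e \in hexE (hex i)) (e \in cube_edges x).
Proof.
apply: (iffP idP) => [/bigfcupP[i /andP[_ xi] ei]|[i xi ei]]; first by exists i.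
by apply/bigfcupP; exists i; rewrite ?mem_index_enum.
Qed.

Lemma cube_edges_hexE x i e : e \in hexE (hex i) -> (e \in cube_edges x) = x i.
Proof.
move=> ei; apply/cube_edgesP/idP => [[j xj ej]|xi]; last by exists i.
by rewrite (hexE_disjoint ei ej).
Qed.

Lemma flips_cube_edges x : flips M0 (phi x) (cube_edges x).
Proof.
elim/bool_ffun_ind: x => [|x i IH] e.
  have /negbTE-> : e \notin cube_edges [ffun => false].
    by apply/cube_edgesP => -[i]; rewrite ffunE.
  by rewrite addbF.
rewrite flips_toggle IH -addbA; congr (_ (+) _).
have [ei|eNi] := boolP (e \in hexE (hex i)).
  by rewrite !(cube_edges_hexE _ ei) toggleE eqxx.
rewrite addbF; apply/cube_edgesP/cube_edgesP => -[j xj ej]; exists j => //.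
all: have ji : j != i by apply: contraNneq eNi => <-.
all: by move: xj; rewrite toggleE (negbTE ji) addbF.
Qed.

Definition clar_hexagons : {fset cell} := [fset hex i | i : 'I_n].
Definition clar_edges : {fset edge} := M0 `\` cube_edges [ffun => true].

Lemma card_clar_hexagons : #|` clar_hexagons| = n.
Proof. by rewrite card_imfset; [rewrite /= size_enum_ord | exact: hex_inj]. Qed.

Lemma mem_clar_hexagons i : hex i \in clar_hexagons.
Proof. exact: in_imfset. Qed.

Lemma mem_clar_edges e :
  (e \in clar_edges) = (e \in M0) && [forall i, e \notin hexE (hex i)].
Proof.
rewrite in_fsetD andbC; congr (_ && _).
apply/negP/forallP => [NE i|Ne /cube_edgesP[i _ ei]]; last by move/negP: (Ne i).
by apply/negP => ei; apply/NE/cube_edgesP; exists i; rewrite ?ffunE.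
Qed.

Lemma clar_cover_hexagons : clar_cover S clar_hexagons clar_edges.
Proof.
split.
- by apply/fsubsetP => _ /imfsetP[i _ ->]; apply: hex_in_S.
- apply/fsubsetP => e; rewrite in_fsetD => /andP[_].
  by case: (phi_pm zero) => /fsubsetP sub _ /sub.
move=> v vS; have [m [mM vm Um]] := covered_onceP (phi_covered zero vS).
have [/existsP[i vi]|/existsPn Nv] := boolP [exists i, v \in hexV (hex i)].
  have -> : [fset c in clar_hexagons | v \in hexV c] = [fset hex i].
    apply/fsetP => c; rewrite in_fset_sep in_fset1.
    apply/andP/eqP => [[/imfsetP[j _ ->] vj]|->].
      by rewrite (hexV_disjoint vi vj).
    by rewrite mem_clar_hexagons.
  suff -> : [fset e in clar_edges | v \in e] = fset0 by rewrite cardfs1 cardfs0.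
  apply/fsetP => e; rewrite in_fset_sep in_fset0 mem_clar_edges -andbA.
  apply/and3P => -[eM /forallP Ne ve]; move/negP: (Ne i); apply.
  exact: alternating_matched_edge (alternating_hex _ i) vi (phi_covered zero vS) eM ve.
have -> : [fset c in clar_hexagons | v \in hexV c] = fset0.
  apply/fsetP => c; rewrite in_fset_sep in_fset0; apply/andP => -[/imfsetP[j _ ->]].
  exact/negP/Nv.
suff -> : [fset e in clar_edges | v \in e] = [fset m] by rewrite cardfs0 cardfs1.
apply/fsetP => e; rewrite in_fset_sep in_fset1 mem_clar_edges.
apply/idP/eqP => [/andP[/andP[eM _] ve]|->]; first exact: Um.
rewrite mM vm andbT; apply/forallP => j; apply: contra (Nv j) => mj.
exact: hexE_hexV mj vm.
Qed.

Lemma phi_in_fC x : in_fC S clar_hexagons clar_edges (phi x).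
Proof.
split=> //; first by move=> _ /imfsetP[i _ ->]; apply: alternating_hex.
apply/fsubsetP => e; rewrite mem_clar_edges => /andP[eM /forallP Ne].
rewrite flips_cube_edges eM addTb; apply/cube_edgesP => -[i _ ei].
by move/negP: (Ne i).
Qed.

Lemma in_fC_off_hexagons M e : in_fC S clar_hexagons clar_edges M ->
  (forall i, e \notin hexE (hex i)) -> (e \in M) = (e \in M0).
Proof.
case=> -[/fsubsetP MS covM] altM /fsubsetP EsM Ne.
have M0_off f : f \in M0 -> (forall i, f \notin hexE (hex i)) -> f \in M.
  by move=> fM0 Nf; apply/EsM; rewrite mem_clar_edges fM0; apply/forallP.
apply/idP/idP => [eM|eM0]; last exact: M0_off.
have [u ue uS] := HE_vertex (MS _ eM).
have [/existsP[i ui]|/existsPn Nu] := boolP [exists i, u \in hexV (hex i)].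
  move/negP: (Ne i); case; apply: alternating_matched_edge ui (covM u uS) eM ue.
  exact/altM/mem_clar_hexagons.
have [m [mM0 um _]] := covered_onceP (phi_covered zero uS).
have mM : m \in M.
  apply: (M0_off m mM0) => i; apply: contra (Nu i) => mi.
  exact: hexE_hexV mi um.
by have [m' [_ _ UM]] := covered_onceP (covM u uS); rewrite (UM _ eM ue) -(UM _ mM um).
Qed.

Lemma in_fC_phi M : in_fC S clar_hexagons clar_edges M -> exists x, phi x = M.
Proof.
move=> MC; have [_ altM _] := MC.
pose x := [ffun i => (hexedge (hex i) 0 \in M) != (hexedge (hex i) 0 \in M0)].
exists x; apply/fsetP => e; rewrite flips_cube_edges.
have [/existsP[i ei]|/existsPn Ne] := boolP [exists i, e \in hexE (hex i)].
  rewrite (cube_edges_hexE _ ei) ffunE; case/hexEP: ei => k Hk ->.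
  by rewrite (alternating_agree (altM _ (mem_clar_hexagons i)) (alternating_hex zero i) Hk).
have /negbTE-> : e \notin cube_edges x by apply/cube_edgesP => -[i _]; apply/negP/Ne.
by rewrite addbF (in_fC_off_hexagons MC Ne).
Qed.

End CubeInResonanceGraph.

Unset Implicit Arguments.
Theorem lemma6 (S : {fset cell}) (n : nat) (W : {fset {fset edge}}) :
  hexagonal_system S -> kekulean S -> induced_Qn S n W ->
  exists (Hs : {fset cell}) (Es : {fset edge}),
    [/\ clar_cover S Hs Es, #|` Hs| = n &
        forall M, M \in W <-> in_fC S Hs Es M].
Proof.
move=> _ _ [W_pm [phi [phi_inj W_phi phi_adj]]].
have phi_pm x : perfect_matching S (phi x) by apply/W_pm/W_phi; exists x.
have cube_adj x y : hq_adj x y -> res_adj S (phi x) (phi y) by move/phi_adj.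
exists (clar_hexagons cube_adj), (clar_edges cube_adj); split.
- exact: clar_cover_hexagons.
- exact: card_clar_hexagons.
move=> M; rewrite W_phi; split=> [[x <-]|]; first exact: phi_in_fC.
exact: in_fC_phi.
Qed.
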